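(* Let $n\ge 2$, $N=n(n-1)/2$, $1\le i<j\le n$, $\phi,\alpha\in\mathbb{R}$, and let $U=R(i,j,\phi,\alpha)$. Let $\mathcal{R}=\mathcal{R}_{ij}(U)\in\mathbb{C}^{2N\times 2N}$ be the Jacobi annihilator. Then $\mathcal{R}$ agrees with the identity matrix $I_{2N}$ outside exactly $2n-2$ principal submatrices, which are determined by $$\mathcal{R}_{\tau(i,j),\tau(i,j)}=0,\qquad \mathcal{R}_{\tau(j,i),\tau(j,i)}=0,$$ and, for every $1\le r\le n$ with $r\notin\{i,j\}$, $$\begin{bmatrix}\mathcal{R}_{\tau(r,i),\tau(r,i)} & \mathcal{R}_{\tau(r,i),\tau(r,j)}\\ \mathcal{R}_{\tau(r,j),\tau(r,i)} & \mathcal{R}_{\tau(r,j),\tau(r,j)}\end{bmatrix}=\begin{bmatrix}\cos\phi & e^{-\imath\alpha}\sin\phi\\ -e^{\imath\alpha}\sin\phi & \cos\phi\end{bmatrix},$$ $$\begin{bmatrix}\mathcal{R}_{\tau(i,r),\tau(i,r)} & \mathcal{R}_{\tau(i,r),\tau(j,r)}\\ \mathcal{R}_{\tau(j,r),\tau(i,r)} & \mathcal{R}_{\tau(j,r),\tau(j,r)}\end{bmatrix}=\begin{bmatrix}\cos\phi & e^{\imath\alpha}\sin\phi\\ -e^{-\imath\alpha}\sin\phi & \cos\phi\end{bmatrix}.$$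
   Context: $\imath=\sqrt{-1}$. For $1\le i<j\le n$ and real $\phi,\alpha$, the complex plane rotation $R(i,j,\phi,\alpha)$ is the $n\times n$ matrix equal to $I_n$ except for the entries $(i,i)$ and $(j,j)$, both equal to $\cos\phi$, the entry $(i,j)$ equal to $-e^{\imath\alpha}\sin\phi$, and the entry $(j,i)$ equal to $e^{-\imath\alpha}\sin\phi$. Let $N=n(n-1)/2$. For $A=(a_{st})\in\mathbb{C}^{n\times n}$ and $2\le s,t\le n$ put $c_t=(a_{1t},a_{2t},\dots,a_{t-1,t})^T$ and $r_s=(a_{s1},\dots,a_{s,s-1})$, and define the linear map $\mathrm{ve}:\mathbb{C}^{n\times n}\to\mathbb{C}^{2N}$ by $\mathrm{ve}(A)=[c_2^T,c_3^T,\dots,c_n^T,r_2,r_3,\dots,r_n]^T$. Define $\tau(s,t)=(t-1)(t-2)/2+s$ for $1\le s<t\le n$ and $\tau(s,t)=\tau(t,s)+N$ for $1\le t<s\le n$; thus $\tau(s,t)$ is the position of $a_{st}$ in $\mathrm{ve}(A)$. Let $\nu_{ij}:\mathbb{C}^{n\times n}\to\mathbb{C}^{n\times n}$ be the linear map that sets the entries in positions $(i,j)$ and $(j,i)$ to zero. For $U=R(i,j,\phi,\alpha)$, the Jacobi annihilator $\mathcal{R}_{ij}(U)$ is the unique $2N\times 2N$ matrix with $\mathcal{R}_{ij}(U)\,\mathrm{ve}(A)=\mathrm{ve}(\nu_{ij}(U^*AU))$ for all $A\in\mathbb{C}^{n\times n}$ (well defined since $\mathrm{ve}$ is surjective and $\mathrm{ve}(\nu_{ij}(U^*AU))$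 depends only on the off-diagonal entries of $A$). *)

From HB Require Import structures.
From mathcomp Require Import all_boot all_order all_algebra.
From mathcomp Require Import all_classical all_reals all_analysis.
From mathcomp Require Import complex.
Set Implicit Arguments. Unset Strict Implicit. Unset Printing Implicit Defensive.
Import Order.TTheory GRing.Theory Num.Theory.
Local Open Scope ring_scope.
Local Open Scope complex_scope.

(* Conventions: indices are 0-based ('I_n), so the paper's index s
   corresponds to our s - 1; positions in ve(A) are likewise 0-based. *)

Section Defs.
Variable R : realType.
Local Notation C := R[i].

Definition expi (a : R) : C := (cos a) +i* (sin a).

Definition plane_rot (n : nat) (i j : 'I_n) (phi alpha : R) : 'M[C]_n :=
  \matrix_(s, t)
    if ((s == i) && (t == i)) || ((s == j) && (t == j)) then (cos phi)%:C
    else if (s == i) && (t == j) then - (expi alpha * (sin phi)%:C)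
    else if (s == j) && (t == i) then expi (- alpha) * (sin phi)%:C
    else (s == t)%:R.

Definition adjmx (n : nat) (U : 'M[C]_n) : 'M[C]_n := map_mx (@conjc R) U^T.

Definition nu (n : nat) (i j : 'I_n) (A : 'M[C]_n) : 'M[C]_n :=
  \matrix_(s, t)
    if ((s == i) && (t == j)) || ((s == j) && (t == i)) then 0 else A s t.
End Defs.

Definition NN (n : nat) : nat := (n * (n - 1)) %/ 2.

(* 0-based tau: the paper's tau(s+1,t+1) - 1.  For s < t it is
   t(t-1)/2 + s, for t < s it is tau(t,s) + N.  (Diagonal: unused.) *)
Definition tau0 (n : nat) (s t : 'I_n) : nat :=
  if (s < t)%N then ((t * (t - 1)) %/ 2 + s)%N
  else ((s * (s - 1)) %/ 2 + t + NN n)%N.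

Section Ve.
Variable R : realType.
Local Notation C := R[i].

(* ve(A): entry a_{st} (s <> t) sits at position tau(s,t). *)
Definition ve (n : nat) (A : 'M[C]_n) : 'cV[C]_(NN n + NN n) :=
  \col_p \sum_(s < n) \sum_(t < n | s != t)
           (if tau0 s t == val p then A s t else 0).

Definition is_jacobi_annihilator (n : nat) (i j : 'I_n) (U : 'M[C]_n)
  (M : 'M[C]_(NN n + NN n)) : Prop :=
  forall A : 'M[C]_n, M *m ve A = ve (nu i j (adjmx U *m A *m U)).

Definition entry_is (m : nat) (M : 'M[C]_m) (a b : nat) (x : C) : Prop :=
  forall p q : 'I_m, val p = a -> val q = b -> M p q = x.

Definition in_blocks (n : nat) (i j : 'I_n) (p q : nat) : Prop :=
  (p = tau0 i j /\ q = tau0 i j) \/ (p = tau0 j i /\ q = tau0 j i) \/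
  exists r : 'I_n, r != i /\ r != j /\
    (((p = tau0 r i \/ p = tau0 r j) /\ (q = tau0 r i \/ q = tau0 r j)) \/
     ((p = tau0 i r \/ p = tau0 j r) /\ (q = tau0 i r \/ q = tau0 j r))).
End Ve.

From HB Require Import structures.
From mathcomp Require Import all_boot all_order all_algebra.
From mathcomp Require Import all_classical all_reals all_analysis.
From mathcomp Require Import complex zify.
Import Order.TTheory GRing.Theory Num.Theory.

(* The Jacobi annihilator is the matrix, in the coordinates [ve], of the linear
   map A |-> ve (nu_ij (U^* A U)).  Its column at tau(c,d) is the image of the
   matrix unit E_cd, whose entry at tau(a,b) is conj(U_ca) U_db, except at the
   pivot positions (a,b) = (i,j), (j,i) where nu_ij kills it.  As U is the
   identity outside rows and columns i and j, that entry is the Kronecker delta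
   of (a,b) and (c,d) unless a = c lies outside {i,j} while b, d lie in {i,j}, or
   symmetrically b = d lies outside while a, c lie in {i,j}: these are the 2 x 2
   blocks, filled with entries of U and of its conjugate.  The same computation
   shows that the diagonal units E_cc are mapped to 0, so the map factors through
   ve, whose kernel consists of the diagonal matrices. *)

Lemma NNS t : NN t.+1 = NN t + t.
Proof.
case: t => [//|t]; rewrite /NN !subSS !subn0.
have -> : t.+2 * t.+1 = t.+1 * 2 + t.+1 * t by nia.
by rewrite divnMDl // addnC.
Qed.

Lemma NN_add_leq {t t'} : t < t' -> NN t + t <= NN t'.
Proof.
elim: t' => [//|t' IH]; rewrite ltnS leq_eqVlt NNS => /orP[/eqP->//|/IH]; lia.
Qed.

Lemma NN_add_inj {s t s' t'} :
  s < t -> s' < t' -> NN t + s = NN t' + s' -> t = t' /\ s = s'.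
Proof.
move=> st st' e; case: (ltngtP t t') => [lt|lt|eq].
- by have := NN_add_leq lt; lia.
- by have := NN_add_leq lt; lia.
- by subst; lia.
Qed.

Lemma NN_decomp m p : p < NN m -> exists t s, [/\ s < t, t < m & p = NN t + s].
Proof.
elim: m => [//|m IH]; rewrite NNS => hp.
case: (ltnP p (NN m)) => [/IH [t [s [st tm ->]]]|h].
  by exists t, s; split => //; lia.
by exists m, (p - NN m); split; lia.
Qed.

Section Tau.
Context {n : nat}.
Implicit Types s t : 'I_n.

Lemma tau0_lt {s t} : s != t -> tau0 s t < NN n + NN n.
Proof.
move=> st; have [sn tn] := (ltn_ord s, ltn_ord t); rewrite /tau0 -/(NN s) -/(NN t).
case: (ltnP s t) => [lt|le]; first by have := NN_add_leq tn; lia.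
have : t < s by rewrite ltn_neqAle le eq_sym st.
by have := NN_add_leq sn; lia.
Qed.

Lemma tau0_inj {s t s' t'} : s != t -> s' != t' ->
  tau0 s t = tau0 s' t' -> s = s' /\ t = t'.
Proof.
move=> st st'.
have [lt_sn lt_tn] := (ltn_ord s, ltn_ord t).
have [lt_s'n lt_t'n] := (ltn_ord s', ltn_ord t').
rewrite /tau0 -/(NN s) -/(NN t) -/(NN s') -/(NN t').
case: (ltnP s t) => h; case: (ltnP s' t') => h' e.
- by have [/val_inj -> /val_inj ->] := NN_add_inj h h' e.
- by have := NN_add_leq lt_tn; lia.
- by have := NN_add_leq lt_t'n; lia.
- have lt_ts : t < s by rewrite ltn_neqAle val_eqE eq_sym st h.
  have lt_t's' : t' < s' by rewrite ltn_neqAle val_eqE eq_sym st' h'.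
  have /(NN_add_inj lt_ts lt_t's') [/val_inj -> /val_inj ->] // : NN s + t = NN s' + t'.
  by lia.
Qed.

Lemma tau0_surj {p} : p < NN n + NN n -> exists s t, s != t /\ tau0 s t = p.
Proof.
move=> hp; case: (ltnP p (NN n)) => [|le].
  move=> /NN_decomp [t [s [st tn ->]]].
  exists (Ordinal (ltn_trans st tn)), (Ordinal tn).
  by rewrite -val_eqE /tau0 /= st (ltn_eqF st).
have /NN_decomp [s [t [ts sn e]]] : p - NN n < NN n by lia.
exists (Ordinal sn), (Ordinal (ltn_trans ts sn)).
rewrite -val_eqE /tau0 /= -/(NN s) ltnNge (ltnW ts) (gtn_eqF ts) /=; lia.
Qed.

Lemma eq_tau0_ord {m} {p q : 'I_m} {s t s' t'} : s != t -> s' != t' ->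
  val p = tau0 s t -> val q = tau0 s' t' -> (p == q) = (s == s') && (t == t').
Proof.
move=> st st' hp hq; apply/eqP/andP => [/(congr1 val)|[/eqP ss' /eqP tt']].
  by rewrite hp hq => /(tau0_inj st st') [-> ->].
by apply: val_inj; rewrite hp hq ss' tt'.
Qed.

End Tau.

Local Open Scope ring_scope.
Local Open Scope complex_scope.

Section Ve.
Context {R : realType} {n : nat}.
Local Notation C := R[i].
Local Notation N2 := (NN n + NN n).

Lemma ve_is_linear : linear (@ve R n).
Proof.
move=> a A B; apply/matrixP => p k; rewrite !mxE mulr_sumr -big_split /=.
apply: eq_bigr => s _; rewrite mulr_sumr -big_split /=.
by apply: eq_bigr => t _; rewrite !mxE; case: ifP; rewrite ?mulr0 ?addr0.
Qed.

HB.instance Definition _ :=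
  GRing.isLinear.Build C 'M[C]_n 'cV[C]_N2 *:%R (@ve R n) ve_is_linear.

Lemma ve_entry (A : 'M[C]_n) {a b} {p : 'I_N2} :
  a != b -> val p = tau0 a b -> ve A p 0 = A a b.
Proof.
move=> ab hp; rewrite mxE (bigD1 a) //= (bigD1 b) //= hp eqxx.
rewrite big1 ?addr0 => [|t /andP[ta tb]]; last first.
  by case: eqP => // /(tau0_inj ta ab) [_ eq_tb]; rewrite eq_tb eqxx in tb.
rewrite big1 ?addr0 // => s sa; rewrite big1 // => t st.
by case: eqP => // /(tau0_inj st ab) [eq_sa _]; rewrite eq_sa eqxx in sa.
Qed.

Lemma ve_delta {c d} {q : 'I_N2} :
  c != d -> val q = tau0 c d -> ve (delta_mx c d : 'M[C]_n) = delta_mx q 0.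
Proof.
move=> cd hq; apply/matrixP => p k; rewrite [k]ord1.
have [s [t [st hp]]] := tau0_surj (ltn_ord p).
by rewrite (ve_entry _ st (esym hp)) !mxE eqxx andbT (eq_tau0_ord st cd (esym hp) hq).
Qed.

Lemma ve_factor_entry {m} (L : 'M[C]_n -> 'cV[C]_m) {M : 'M[C]_(m, N2)} {c d p q} :
  (forall A, M *m ve A = L A) -> c != d -> val q = tau0 c d ->
  M p q = L (delta_mx c d) p 0.
Proof.
by move=> ML cd hq; rewrite -ML (ve_delta cd hq) -colE mxE.
Qed.

Lemma ve_delta_dot (A : 'M[C]_n) s t : s != t ->
  (ve (delta_mx s t : 'M[C]_n))^T *m ve A = (A s t)%:M.
Proof.
move=> st; rewrite (ve_delta st (q := Ordinal (tau0_lt st))) // trmx_delta -rowE.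
by rewrite [LHS]mx11_scalar mxE (ve_entry _ st).
Qed.

Lemma ve_factor m (L : {linear 'M[C]_n -> 'cV[C]_m}) :
  (forall c, L (delta_mx c c) = 0) -> exists M, forall A, M *m ve A = L A.
Proof.
move=> L_diag; pose E (st : 'I_n * 'I_n) : 'M[C]_n := delta_mx st.1 st.2.
exists (\sum_(st | st.1 != st.2) L (E st) *m (ve (E st))^T) => A.
rewrite [in RHS](matrix_sum_delta A) pair_bigA linear_sum /=.
rewrite [RHS](bigID (fun st : 'I_n * 'I_n => st.1 != st.2)) /=.
rewrite [X in _ = _ + X]big1 ?addr0.
  rewrite mulmx_suml; apply: eq_bigr => -[s t] /= st.
  by rewrite -mulmxA ve_delta_dot // mul_mx_scalar linearZ.
by move=> -[s t] /= /negPn/eqP->; rewrite linearZ /= L_diag scaler0.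
Qed.

End Ve.

Lemma mulmx_delta_mulmxE (Rg : pzRingType) m k l r (X : 'M[Rg]_(m, k))
    (Y : 'M[Rg]_(l, r)) c d a b :
  (X *m delta_mx c d *m Y) a b = X a c * Y d b.
Proof.
rewrite -(mul_delta_mx (0 : 'I_1)) mulmxA -colE -mulmxA -rowE.
by rewrite mxE big_ord1 !mxE.
Qed.

Definition pivot {n} (i j a b : 'I_n) : bool :=
  ((a == i) && (b == j)) || ((a == j) && (b == i)).

Section JacobiMap.
Context {R : realType} {n : nat} {i j : 'I_n} {U : 'M[R[i]]_n}.
Local Notation C := R[i].
Local Notation N2 := (NN n + NN n).

Lemma nu_is_linear : linear (@nu R n i j).
Proof.
by move=> a A B; apply/matrixP => s t; rewrite !mxE; case: ifP; rewrite ?mulr0 ?addr0.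
Qed.

HB.instance Definition _ :=
  GRing.isLinear.Build C 'M[C]_n 'M[C]_n *:%R (@nu R n i j) nu_is_linear.

Definition jacobi_map (A : 'M[C]_n) : 'cV[C]_N2 := ve (nu i j (adjmx U *m A *m U)).

Lemma jacobi_map_is_linear : linear jacobi_map.
Proof.
by move=> a A B; rewrite /jacobi_map mulmxDr mulmxDl -scalemxAr -scalemxAl !linearP.
Qed.

HB.instance Definition _ :=
  GRing.isLinear.Build C 'M[C]_n 'cV[C]_N2 *:%R jacobi_map jacobi_map_is_linear.

Lemma jacobi_map_deltaE {a b} c d {p : 'I_N2} : a != b -> val p = tau0 a b ->
  jacobi_map (delta_mx c d) p 0 =
    if pivot i j a b then 0 else (U c a)^* * U d b.
Proof.
by move=> ab hp; rewrite (ve_entry _ ab hp) mxE mulmx_delta_mulmxE !mxE.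
Qed.

Lemma jacobi_annihilatorE {M a b c d} {p q : 'I_N2} :
  is_jacobi_annihilator i j U M -> a != b -> c != d ->
  val p = tau0 a b -> val q = tau0 c d ->
  M p q = if pivot i j a b then 0 else (U c a)^* * U d b.
Proof.
move=> HM ab cd hp hq.
by rewrite (ve_factor_entry jacobi_map HM cd hq) (jacobi_map_deltaE _ _ ab hp).
Qed.

End JacobiMap.

Arguments jacobi_map {R n} i j U A.

Section Blocks.
Context {n : nat} {i j : 'I_n}.

Lemma pivot_of_mem {a b} :
  a != b -> a \in [:: i; j] -> b \in [:: i; j] -> pivot i j a b.
Proof.
rewrite /pivot !inE => ab /orP[] /eqP ea /orP[] /eqP eb; subst; rewrite ?eqxx ?orbT //.
all: by rewrite eqxx in ab.
Qed.

Lemma in_blocks_pivot a b : pivot i j a b -> in_blocks i j (tau0 a b) (tau0 a b).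
Proof. by case/orP => /andP[/eqP-> /eqP->]; [left|right; left]. Qed.

Lemma in_blocks_row r b d : r \notin [:: i; j] ->
  b \in [:: i; j] -> d \in [:: i; j] -> in_blocks i j (tau0 r b) (tau0 r d).
Proof.
rewrite !inE negb_or => /andP[ri rj] hb hd; right; right; exists r.
by do 2!split=> //; left; split; [case/orP: hb|case/orP: hd] => /eqP->; auto.
Qed.

Lemma in_blocks_col r b d : r \notin [:: i; j] ->
  b \in [:: i; j] -> d \in [:: i; j] -> in_blocks i j (tau0 b r) (tau0 d r).
Proof.
rewrite !inE negb_or => /andP[ri rj] hb hd; right; right; exists r.
by do 2!split=> //; right; split; [case/orP: hb|case/orP: hd] => /eqP->; auto.
Qed.

End Blocks.

Section PlaneTransformation.
Context {R : realType} {n : nat} {i j : 'I_n} {U : 'M[R[i]]_n}.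
Hypothesis ij : i != j.
Hypothesis U_id_row : forall {x y}, x \notin [:: i; j] -> U x y = (x == y)%:R.
Hypothesis U_id_col : forall {x y}, y \notin [:: i; j] -> U x y = (x == y)%:R.

Lemma jacobi_map_delta_diag c : jacobi_map i j U (delta_mx c c) = 0.
Proof.
apply/matrixP => p k; rewrite [k]ord1 [RHS]mxE.
have [a [b [ab hp]]] := tau0_surj (ltn_ord p).
rewrite (jacobi_map_deltaE _ _ ab (esym hp)); case: ifP => // npivot.
have [a_out|/negPn a_in] := boolP (a \notin [:: i; j]).
  rewrite (U_id_col a_out) rmorph_nat.
  have [->|_] := eqVneq c a; last by rewrite mul0r.
  by rewrite (U_id_row a_out) (negbTE ab) mulr0.
have [b_out|/negPn b_in] := boolP (b \notin [:: i; j]).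
  rewrite (U_id_col b_out).
  have [->|_] := eqVneq c b; last by rewrite mulr0.
  by rewrite (U_id_row b_out) eq_sym (negbTE ab) rmorph_nat mul0r.
by rewrite (pivot_of_mem ab a_in b_in) in npivot.
Qed.

Lemma jacobi_annihilator_exists : exists M, is_jacobi_annihilator i j U M.
Proof. exact: ve_factor jacobi_map_delta_diag. Qed.

Context {M : 'M[R[i]]_(NN n + NN n)} (HM : is_jacobi_annihilator i j U M).

Lemma jacobi_annihilator_pivot_row {a b} {p q : 'I_(NN n + NN n)} :
  pivot i j a b -> val p = tau0 a b -> M p q = 0.
Proof.
move=> pivot_ab hp; have [c [d [cd hq]]] := tau0_surj (ltn_ord q).
have ab : a != b.
  by case/orP: pivot_ab => /andP[/eqP-> /eqP->]; rewrite // eq_sym.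
by rewrite (jacobi_annihilatorE HM ab cd hp (esym hq)) pivot_ab.
Qed.

Lemma jacobi_annihilator_row_block {r b d} {p q : 'I_(NN n + NN n)} :
  r \notin [:: i; j] -> r != b -> r != d ->
  val p = tau0 r b -> val q = tau0 r d -> M p q = U d b.
Proof.
move=> r_out rb rd hp hq; rewrite (jacobi_annihilatorE HM rb rd hp hq).
move: (r_out); rewrite /pivot !inE negb_or => /andP[/negbTE-> /negbTE->] /=.
by rewrite (U_id_row r_out) eqxx rmorph1 mul1r.
Qed.

Lemma jacobi_annihilator_col_block {r b d} {p q : 'I_(NN n + NN n)} :
  r \notin [:: i; j] -> b != r -> d != r ->
  val p = tau0 b r -> val q = tau0 d r -> M p q = (U d b)^*.
Proof.
move=> r_out br dr hp hq; rewrite (jacobi_annihilatorE HM br dr hp hq).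
move: (r_out); rewrite /pivot !inE negb_or => /andP[/negbTE-> /negbTE->] /=.
by rewrite !andbF (U_id_row r_out) eqxx mulr1.
Qed.

Lemma jacobi_annihilator_off_blocks (p q : 'I_(NN n + NN n)) :
  ~ in_blocks i j p q -> M p q = (p == q)%:R.
Proof.
have [a [b [ab /esym hp]]] := tau0_surj (ltn_ord p).
have [c [d [cd /esym hq]]] := tau0_surj (ltn_ord q).
rewrite (jacobi_annihilatorE HM ab cd hp hq) (eq_tau0_ord ab cd hp hq) hp hq.
case: ifP => [pivot_ab|npivot] nb.
  have [ac|_] := eqVneq a c; last by [].
  have [bd|_] := eqVneq b d; last by rewrite andbF.
  by case: nb; rewrite -ac -bd; apply: in_blocks_pivot.
have [a_out|/negPn a_in] := boolP (a \notin [:: i; j]).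
  rewrite (U_id_col a_out) rmorph_nat eq_sym.
  have [ca|_] := eqVneq c a; last by rewrite mul0r.
  rewrite mul1r eq_sym; have [b_out|/negPn b_in] := boolP (b \notin [:: i; j]).
    exact: U_id_col.
  have [d_out|/negPn d_in] := boolP (d \notin [:: i; j]); first exact: U_id_row.
  by case: nb; rewrite ca; apply: in_blocks_row.
have [b_out|/negPn b_in] := boolP (b \notin [:: i; j]); last first.
  by rewrite (pivot_of_mem ab a_in b_in) in npivot.
rewrite (U_id_col b_out) eq_sym.
have [db|_] := eqVneq d b; last by rewrite mulr0 andbF.
rewrite mulr1 andbT eq_sym; have [c_out|/negPn c_in] := boolP (c \notin [:: i; j]).
  by rewrite (U_id_row c_out) rmorph_nat.
by case: nb; rewrite db; apply: in_blocks_col.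
Qed.

End PlaneTransformation.

Lemma conjc_expi_real (R : realType) (a x : R) : (expi a * x%:C)^* = expi (- a) * x%:C.
Proof. by rewrite /expi cosN sinN; simpc. Qed.

Section PlaneRotation.
Context {R : realType} {n : nat} (i j : 'I_n) (phi alpha : R).
Local Notation U := (plane_rot i j phi alpha).

Lemma plane_rot_id_row x y : x \notin [:: i; j] -> U x y = (x == y)%:R.
Proof.
by rewrite !inE negb_or => /andP[xi xj]; rewrite mxE (negbTE xi) (negbTE xj).
Qed.

Lemma plane_rot_id_col x y : y \notin [:: i; j] -> U x y = (x == y)%:R.
Proof.
by rewrite !inE negb_or => /andP[yi yj]; rewrite mxE (negbTE yi) (negbTE yj) !andbF.
Qed.

Lemma plane_rot_ii : U i i = (cos phi)%:C.
Proof. by rewrite mxE !eqxx. Qed.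

Lemma plane_rot_jj : U j j = (cos phi)%:C.
Proof. by rewrite mxE !eqxx orbT. Qed.

Hypothesis ij : i != j.

Lemma plane_rot_ij : U i j = - (expi alpha * (sin phi)%:C).
Proof. by rewrite mxE !eqxx (negbTE ij) eq_sym (negbTE ij). Qed.

Lemma plane_rot_ji : U j i = expi (- alpha) * (sin phi)%:C.
Proof. by rewrite mxE !eqxx (negbTE ij) eq_sym (negbTE ij). Qed.

End PlaneRotation.

Theorem theorem2p4 (R : realType) (n : nat) (i j : 'I_n) (phi alpha : R) :
  (2 <= n)%N -> (i < j)%N ->
  (exists M, is_jacobi_annihilator i j (plane_rot i j phi alpha) M) /\
  forall M : 'M[complex R]_(NN n + NN n),
    is_jacobi_annihilator i j (plane_rot i j phi alpha) M ->
    [/\ (* identity outside the distinguished principal submatrices *)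
        forall p q : 'I_(NN n + NN n),
          ~ in_blocks i j (val p) (val q) -> M p q = (p == q)%:R,
        entry_is M (tau0 i j) (tau0 i j) 0,
        entry_is M (tau0 j i) (tau0 j i) 0,
        forall r : 'I_n, r != i -> r != j ->
          [/\ entry_is M (tau0 r i) (tau0 r i) (cos phi)%:C,
              entry_is M (tau0 r i) (tau0 r j) (expi (- alpha) * (sin phi)%:C),
              entry_is M (tau0 r j) (tau0 r i) (- (expi alpha * (sin phi)%:C)) &
              entry_is M (tau0 r j) (tau0 r j) (cos phi)%:C] &
        forall r : 'I_n, r != i -> r != j ->
          [/\ entry_is M (tau0 i r) (tau0 i r) (cos phi)%:C,
              entry_is M (tau0 i r) (tau0 j r) (expi alpha * (sin phi)%:C),
              entry_is M (tau0 j r) (tau0 i r) (- (expi (- alpha) * (sin phi)%:C)) &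
              entry_is M (tau0 j r) (tau0 j r) (cos phi)%:C]].
Proof.
move=> _ lt_ij; have ij : i != j by rewrite neq_ltn lt_ij.
have U_row := plane_rot_id_row i j phi alpha.
have U_col := plane_rot_id_col i j phi alpha.
split=> [|M HM]; first exact: (jacobi_annihilator_exists U_row U_col).
have row_block := jacobi_annihilator_row_block U_row HM.
have col_block := jacobi_annihilator_col_block U_row HM.
split=> [p q|p q hp _|p q hp _|r ri rj|r ri rj].
- exact: (jacobi_annihilator_off_blocks U_row U_col HM).
- by apply: (jacobi_annihilator_pivot_row ij HM _ hp); rewrite /pivot !eqxx.
- by apply: (jacobi_annihilator_pivot_row ij HM _ hp); rewrite /pivot !eqxx orbT.
- have r_out : r \notin [:: i; j] by rewrite !inE negb_or ri rj.
  split=> p q hp hq.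
  + by rewrite (row_block _ _ _ _ _ r_out ri ri hp hq) plane_rot_ii.
  + by rewrite (row_block _ _ _ _ _ r_out ri rj hp hq) plane_rot_ji.
  + by rewrite (row_block _ _ _ _ _ r_out rj ri hp hq) plane_rot_ij.
  + by rewrite (row_block _ _ _ _ _ r_out rj rj hp hq) plane_rot_jj.
- have r_out : r \notin [:: i; j] by rewrite !inE negb_or ri rj.
  have [ir jr] : i != r /\ j != r by rewrite ![_ == r]eq_sym.
  split=> p q hp hq.
  + by rewrite (col_block _ _ _ _ _ r_out ir ir hp hq) plane_rot_ii conjc_real.
  + rewrite (col_block _ _ _ _ _ r_out ir jr hp hq) plane_rot_ji //.
    by rewrite conjc_expi_real opprK.
  + rewrite (col_block _ _ _ _ _ r_out jr ir hp hq) plane_rot_ij //.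
    by rewrite rmorphN -conjc_expi_real.
  + by rewrite (col_block _ _ _ _ _ r_out jr jr hp hq) plane_rot_jj conjc_real.
Qed.
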